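(* For all integers $n\ge0$ and $k\ge0$, $$\mu(N|_{2n},k,J^{*})\equiv\begin{cases}0\pmod 2,&\text{if }k\text{ is odd},\\ \mu(P|_n,k/2,J^{*})\pmod 2,&\text{if }k\text{ is even}.\end{cases}$$
   Context: Let $N=\{0,1,2,\ldots\}$, $J^{*}=\{(2n+1)2^{2k}-1 : n,k\in N,\ k>0\}=\{3,11,15,19,\ldots\}$, and $P=\{k\in N: k\equiv0,3\pmod 4\}$. For an infinite set $A\subseteq N$, $A|_m$ denotes the set of the $m$ smallest elements of $A$. An involution on a finite set $A$ is a permutation $\sigma$ of $A$ with $\sigma=\sigma^{-1}$; its cycles are fixed points and transpositions $(c,d)$. A transposition $(c,d)$ is said to be in a set $B$ if $c+d\in B$. For a finite set $A\subseteq N$, an integer $k\ge0$ and a set $B\subseteq N$, $\mu(A,k,B)$ denotes the number of involutions of $A$ having exactly $k$ transpositions, all of which are in $B$. *)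

From mathcomp Require Import all_boot all_fingroup.
Set Implicit Arguments. Unset Strict Implicit. Unset Printing Implicit Defensive.


Definition JstarP (x : nat) : Prop :=
  exists n k : nat, 0 < k /\ x = (2 * n + 1) * 2 ^ (2 * k) - 1.

(* Boolean version: the existentials are bounded (n, k <= x necessarily). *)
Definition Jstar : pred nat := fun x =>
  [exists n : 'I_x.+1, exists k : 'I_x.+1,
     (0 < (k : nat)) && (x == (2 * n + 1) * 2 ^ (2 * k) - 1)].

Lemma JstarP_Jstar x : JstarP x <-> Jstar x.
Proof.
split.
- move=> [n [k [k0 ->]]].
  have pos : 0 < (2 * n + 1) * 2 ^ (2 * k) by rewrite muln_gt0 expn_gt0 addn1.
  have E : 2 * n + 1 <= (2 * n + 1) * 2 ^ (2 * k) by rewrite leq_pmulr // expn_gt0.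
  have E2 : 2 ^ (2 * k) <= (2 * n + 1) * 2 ^ (2 * k) by rewrite leq_pmull // addn1.
  have H1 : n < ((2 * n + 1) * 2 ^ (2 * k) - 1).+1.
    rewrite subn1 prednK //; apply: leq_trans E; rewrite addn1 ltnS.
    by rewrite leq_pmull.
  have H2 : k < ((2 * n + 1) * 2 ^ (2 * k) - 1).+1.
    rewrite subn1 prednK //; apply: leq_trans E2.
    apply: (leq_trans _ (ltn_expl (2 * k) (isT : 1 < 2))).
    by rewrite ltnS leq_pmull.
  by apply/existsP; exists (Ordinal H1); apply/existsP; exists (Ordinal H2);
    rewrite /= k0 eqxx.
- move=> /existsP [n /existsP [k /andP [k0 /eqP ->]]].
  by exists n, k.
Qed.

Definition Pset : pred nat := fun k => (k %% 4 == 0) || (k %% 4 == 3).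
Definition Nset : pred nat := predT.

(* A|_m : the m smallest elements of A, listed increasingly.  We search
   below 4m, which suffices for every A having at least m elements in
   [0, 4m); this holds for A = N and A = P. *)
Definition first_m (A : pred nat) (m : nat) : seq nat :=
  take m [seq i <- iota 0 (4 * m) | A i].

(* An involution of A is represented as a permutation of 'I_M (M a bound for
   A) supported in A and squaring to the identity; its transpositions (c,d)
   correspond bijectively to the points c with c < s c. *)
Definition mu (A : seq nat) (k : nat) (B : pred nat) : nat :=
  let M := (\max_(a <- A) a).+1 in
  let S := [set i : 'I_M | val i \in A] in
  #|[set s : {perm 'I_M} |
      [&& perm_on S s, (s * s)%g == 1%g,
          #|[set x : 'I_M | x < s x]| == k &
          [forall x : 'I_M, (x < s x) ==> B (val x + val (s x))]]]|.

(* Label N|_{2n} by pairs (i, b) in 'I_n * bool through c = 2i + b.  Every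
   element of J^* is 3 mod 4, so an admissible transposition joins two
   different blocks i <> j with opposite bits b <> b'; flipping both bits
   keeps the sum and the order of its endpoints.  Conjugation by the bit flip
   is therefore an involution of the counted set, which thus has the parity of
   its fixed points.  These are the "doubles" of involutions sigma of the
   blocks (block i sent to block sigma i, bits swapped exactly when sigma moves
   i): each transposition {i, j} of sigma yields the two transpositions with
   sum 2(i + j) + 1, and 2(i + j) + 1 lies in J^* iff P_i + P_j does, where
   P_i = 4 (i %/ 2) + 3 (i %% 2) is the i-th element of P. *)

From mathcomp Require Import all_boot all_fingroup zify.
Set Implicit Arguments. Unset Strict Implicit. Unset Printing Implicit Defensive.

Lemma Jstar_mod4 x : Jstar x -> x %% 4 = 3.
Proof.
move/JstarP_Jstar=> [n [[|k] [// _ ->]]].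
rewrite mulnS expnD expnM; have : 0 < 4 ^ k by rewrite expn_gt0.
lia.
Qed.

Lemma card_involutive_mod2 (T : finType) (f : T -> T) (A : {set T}) :
  involutive f -> {homo f : x / x \in A} ->
  #|A| = #|[set x in A | f x == x]| %[mod 2].
Proof.
move=> fK fA; rewrite setIdE -(cardsID [set x | f x == x] A).
set D := A :\: _.
have fD : fclosed f D.
  have fAE x : (f x \in A) = (x \in A) by apply/idP/idP => [/fA|/fA //]; rewrite fK.
  by move=> x _ /eqP <-; rewrite !inE fAE fK [x == _]eq_sym.
have D2 : D \subset order_set f 2.
  apply/subsetP=> x; rewrite !inE => /andP[fx _].
  by rewrite (@order_cycle _ _ [:: x; f x]) /= ?inE ?fK ?eqxx // andbT eq_sym.
by rewrite -(fcard_order_set (inv_inj fK) D2 fD) addnC modnMDl.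
Qed.

Section PermExtension.

Variables (T U : finType) (e : T -> U).
Hypothesis e_inj : injective e.

Definition ext_fun (s : {perm T}) (y : U) : U :=
  if [pick x | e x == y] is Some x then e (s x) else y.

Lemma ext_funE s x : ext_fun s (e x) = e (s x).
Proof.
by rewrite /ext_fun; case: pickP => [x' /eqP/e_inj -> // | /(_ x)]; rewrite eqxx.
Qed.

Lemma ext_fun_out s y : y \notin codom e -> ext_fun s y = y.
Proof.
by move=> ey; rewrite /ext_fun; case: pickP => // x /eqP exy; rewrite -exy codom_f in ey.
Qed.

Lemma ext_fun_inj (s : {perm T}) : injective (ext_fun s).
Proof.
move=> y1 y2.
have [/codomP[x1 ->] | ey1] := boolP (y1 \in codom e);
  have [/codomP[x2 ->] | ey2] := boolP (y2 \in codom e);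
  rewrite ?ext_funE ?ext_fun_out //.
- by move/e_inj/perm_inj ->.
- by move=> E; rewrite -E codom_f in ey2.
- by move=> E; rewrite E codom_f in ey1.
Qed.

Definition perm_ext (s : {perm T}) : {perm U} := perm (@ext_fun_inj s).

Lemma perm_extE s x : perm_ext s (e x) = e (s x).
Proof. by rewrite permE ext_funE. Qed.

Lemma perm_ext_out s y : y \notin codom e -> perm_ext s y = y.
Proof. by rewrite permE; apply: ext_fun_out. Qed.

Lemma perm_ext_inj : injective perm_ext.
Proof. by move=> s t E; apply/permP => x; apply: e_inj; rewrite -!perm_extE E. Qed.

Lemma perm_extM s t : perm_ext (s * t) = (perm_ext s * perm_ext t)%g.
Proof.
apply/permP => y; rewrite permM.
have [/codomP[x ->] | ey] := boolP (y \in codom e); first by rewrite !perm_extE permM.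
by rewrite !perm_ext_out.
Qed.

Lemma perm_ext1 : perm_ext 1 = 1%g.
Proof.
apply/permP => y; rewrite perm1.
have [/codomP[x ->] | ey] := boolP (y \in codom e); first by rewrite perm_extE perm1.
by rewrite perm_ext_out.
Qed.

Lemma perm_on_ext s : perm_on [set y in codom e] (perm_ext s).
Proof. by apply/subsetP => y; rewrite !inE; apply: contraR => /perm_ext_out ->. Qed.

Lemma perm_onP_ext u : perm_on [set y in codom e] u -> exists s, u = perm_ext s.
Proof.
move=> uS; have ue x : u (e x) \in codom e.
  by have := perm_closed (e x) uS; rewrite !inE codom_f.
pose g x := iinv (ue x).
have g_inj : injective g.
  by move=> x1 x2 /(congr1 e); rewrite !f_iinv => /perm_inj/e_inj.
exists (perm g_inj); apply/permP => y.
have [/codomP[x ->] | ey] := boolP (y \in codom e).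
  by rewrite perm_extE permE f_iinv.
by rewrite perm_ext_out // (out_perm uS) // inE.
Qed.

End PermExtension.

Arguments perm_ext_inj {T U e} e_inj [x1 x2].

(* Involutions of [T] seen through the labelling [a]: each transposition
   [(x, s x)] is recorded once, at the endpoint with the smaller label. *)
Definition invols (T : finType) (a : T -> nat) (k : nat) (B : pred nat) :
    {set {perm T}} :=
  [set s : {perm T} | [&& (s * s)%g == 1%g, #|[set x | a x < a (s x)]| == k &
     [forall x, (a x < a (s x)) ==> B (a x + a (s x))]]].

Lemma invols_moved (T : finType) (a : T -> nat) k B (s : {perm T}) x :
  injective a -> s \in invols a k B -> s x != x -> B (a x + a (s x)).
Proof.
move=> a_inj; rewrite inE => /and3P[/eqP ss _ /forallP sB] sx.
have ssx : s (s x) = x by rewrite -permM ss perm1.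
case: (ltngtP (a x) (a (s x))) => [lt | gt | /a_inj eq].
- by have := sB x; rewrite lt.
- by have := sB (s x); rewrite ssx gt addnC.
- by rewrite -eq eqxx in sx.
Qed.

Section Relabel.

Variables (T : finType) (a : T -> nat) (A : seq nat).
Hypotheses (a_inj : injective a) (A_codom : A =i codom a).

Let M := (\max_(y <- A) y).+1.

Let ltn_max_codom x : a x < M.
Proof. by rewrite ltnS (leq_bigmax_seq (F := id)) // A_codom codom_f. Qed.

Let e x : 'I_M := Ordinal (ltn_max_codom x).

Let e_inj : injective e.
Proof. by move=> x y /(congr1 val) /a_inj. Qed.

Let codom_e : [set i : 'I_M | val i \in A] = [set y in codom e].
Proof.
apply/setP => i; rewrite !inE A_codom.
apply/codomP/codomP => [[x ix] | [x ->]]; last by exists x.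
by exists x; apply: val_inj.
Qed.

Let lt_perm_ext s :
  [set y : 'I_M | y < perm_ext e_inj s y] = e @: [set x | a x < a (s x)].
Proof.
apply/setP => y; rewrite inE.
have [/codomP[x ->] | ey] := boolP (y \in codom e).
  by rewrite perm_extE (mem_imset _ _ e_inj) inE.
rewrite perm_ext_out // ltnn; apply/esym/imsetP => [[x _ yx]].
by rewrite yx codom_f in ey.
Qed.

Let perm_ext_invols s k B :
  [&& perm_on [set i : 'I_M | val i \in A] (perm_ext e_inj s),
      (perm_ext e_inj s * perm_ext e_inj s)%g == 1%g,
      #|[set y : 'I_M | y < perm_ext e_inj s y]| == k &
      [forall y : 'I_M,
         (y < perm_ext e_inj s y) ==> B (val y + val (perm_ext e_inj s y))]]
  = (s \in invols a k B).
Proof.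
rewrite inE codom_e perm_on_ext -perm_extM -(perm_ext1 e_inj) (inj_eq (perm_ext_inj _)).
rewrite lt_perm_ext (card_imset _ e_inj); congr [&& _, _, _ & _].
apply/forallP/forallP => [sB x | sB y]; first by have := sB (e x); rewrite perm_extE.
have [/codomP[x ->] | ey] := boolP (y \in codom e); first by rewrite perm_extE; apply: sB.
by rewrite perm_ext_out // ltnn.
Qed.

Lemma mu_codom k B : mu A k B = #|invols a k B|.
Proof.
rewrite /mu -/M -(card_imset _ (perm_ext_inj e_inj)); congr #|pred_of_set _|.
apply/setP => u; rewrite inE; apply/idP/imsetP => [uA | [s sX ->]]; last first.
  by rewrite perm_ext_invols.
have /andP[+ _] := uA; rewrite codom_e => /(perm_onP_ext e_inj)[s us].
by exists s; rewrite // -perm_ext_invols -us.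
Qed.

End Relabel.

Definition nth_Pset (i : nat) : nat := i %/ 2 * 4 + i %% 2 * 3.

Lemma first_m_Nset n : first_m Nset n = iota 0 n.
Proof. by rewrite /first_m /Nset filter_predT take_iota; congr iota; lia. Qed.

Lemma filter_Pset_iota n :
  [seq i <- iota 0 (4 * n) | Pset i] = map nth_Pset (iota 0 (2 * n)).
Proof.
elim: n => [|n IH]; first by rewrite muln0.
rewrite !mulnSr iotaD [iota 0 (2 * n + 2)]iotaD filter_cat map_cat IH /=; congr (_ ++ _).
rewrite /Pset /nth_Pset !add0n.
have -> : (4 * n) %% 4 = 0 by lia.
have -> : (4 * n).+1 %% 4 = 1 by lia.
have -> : (4 * n).+2 %% 4 = 2 by lia.
have -> : (4 * n).+3 %% 4 = 3 by lia.
by congr [:: _; _]; lia.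
Qed.

Lemma first_m_Pset n : first_m Pset n = map nth_Pset (iota 0 n).
Proof.
rewrite /first_m filter_Pset_iota -map_take take_iota.
by congr (map _ (iota _ _)); lia.
Qed.

Lemma nth_Pset_mono : {mono nth_Pset : i j / i < j}.
Proof. by move=> i j; rewrite /nth_Pset; apply/idP/idP; lia. Qed.

Lemma Jstar_nth_PsetD i j : Jstar (nth_Pset i + nth_Pset j) = Jstar ((i + j) * 2 + 1).
Proof.
have [same | diff] := eqVneq (i %% 2) (j %% 2).
  by apply/idP/idP => /Jstar_mod4; rewrite /nth_Pset; lia.
suff -> : nth_Pset i + nth_Pset j = (i + j) * 2 + 1 by [].
by move: diff; rewrite /nth_Pset; lia.
Qed.

Lemma eqn_mul2_half c k : (c * 2 == k) = ~~ odd k && (c == k./2).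
Proof.
rewrite -divn2; have := modn2 k.
by case: (odd k) => /= k2; [apply/negbTE/eqP | apply/eqP/eqP]; lia.
Qed.

Lemma nth_Pset_inj : injective nth_Pset.
Proof. by move=> i j; rewrite /nth_Pset; lia. Qed.

Lemma first_m_Pset_codom n : first_m Pset n =i codom (fun i : 'I_n => nth_Pset i).
Proof. by move=> y; rewrite first_m_Pset codomE map_comp val_enum_ord. Qed.

Section Doubling.

Variable n : nat.
Implicit Types (x y : 'I_n * bool) (s : {perm 'I_n * bool}) (sigma : {perm 'I_n}).

Definition dbl_val x : nat := x.1 * 2 + x.2.

Lemma dbl_val_inj : injective dbl_val.
Proof.
move=> [i b] [j c]; rewrite /dbl_val /= => E.
have bc : b = c by case: b c E => [] [] //= E; exfalso; lia.
by subst c; congr pair; apply: ord_inj; lia.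
Qed.

Lemma first_m_Nset_codom : first_m Nset (2 * n) =i codom dbl_val.
Proof.
move=> y; rewrite first_m_Nset mem_iota add0n.
apply/idP/codomP => [y_lt | [[i b] ->]]; last first.
  by have := ltn_ord i; case: b; rewrite /dbl_val /=; lia.
have half_lt : y %/ 2 < n by lia.
by exists (Ordinal half_lt, odd y); rewrite /dbl_val /= -modn2 -divn_eq.
Qed.

Definition flip x := (x.1, ~~ x.2).

Lemma flipK : involutive flip.
Proof. by move=> [i b]; rewrite /flip negbK. Qed.

Lemma flip_fst x y : x.1 = y.1 -> x = y \/ x = flip y.
Proof.
by case: x y => [i b] [j c] /= ->; case: b c => [] []; [left | right | right | left].
Qed.

Definition flipp : {perm 'I_n * bool} := perm (can_inj flipK).

Lemma conj_flipE s x : (s ^ flipp)%g x = flip (s (flip x)).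
Proof.
have flipV : flipp^-1%g = flipp.
  by apply/permP => y; apply: (@perm_inj _ flipp); rewrite permKV !permE flipK.
by rewrite conjgE flipV !permM !permE.
Qed.

Lemma conj_flipK : involutive (fun s => s ^ flipp)%g.
Proof. by move=> s; apply/permP => x; rewrite !conj_flipE !flipK. Qed.

Lemma dbl_val_flipD x y : (dbl_val x + dbl_val y) %% 4 = 3 ->
  dbl_val (flip x) + dbl_val (flip y) = dbl_val x + dbl_val y.
Proof. by case: x y => [i [|]] [j [|]]; rewrite /dbl_val /=; lia. Qed.

Lemma ltn_dbl_val_flip x y : (dbl_val x + dbl_val y) %% 4 = 3 ->
  (dbl_val (flip x) < dbl_val (flip y)) = (dbl_val x < dbl_val y).
Proof. by case: x y => [i [|]] [j [|]]; rewrite /dbl_val /= => H; apply/idP/idP; lia. Qed.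

Lemma dbl_val_sum_mod4 x y : (dbl_val x + dbl_val y) %% 4 = 3 ->
  y.2 = ~~ x.2 /\ (x.1 : nat) != y.1.
Proof. by case: x y => [i [|]] [j [|]]; rewrite /dbl_val /= => H; split; lia. Qed.

Lemma conj_flip_invols k s :
  s \in invols dbl_val k Jstar -> (s ^ flipp)%g \in invols dbl_val k Jstar.
Proof.
move=> sX; have sJ y : s y != y -> (dbl_val y + dbl_val (s y)) %% 4 = 3.
  by move=> sy; apply/Jstar_mod4/(invols_moved dbl_val_inj sX).
have lt_conj x : (dbl_val x < dbl_val ((s ^ flipp)%g x)) =
                 (dbl_val (flip x) < dbl_val (s (flip x))).
  rewrite conj_flipE; have [sfx | /sJ fxJ] := eqVneq (s (flip x)) (flip x).
    by rewrite sfx flipK !ltnn.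
  by rewrite -(ltn_dbl_val_flip fxJ) flipK.
move: sX; rewrite !inE => /and3P[ss cnt /forallP sB]; apply/and3P; split.
- by rewrite -conjMg (eqP ss) conj1g.
- have -> : [set x | dbl_val x < dbl_val ((s ^ flipp)%g x)] =
            flipp @^-1: [set y | dbl_val y < dbl_val (s y)].
    by apply/setP => x; rewrite !inE lt_conj permE.
  by rewrite card_preimset //; apply: perm_inj.
- apply/forallP => x; apply/implyP; rewrite lt_conj => lt.
  have fxJ := sB (flip x); rewrite lt /= in fxJ.
  by rewrite conj_flipE -{1}(flipK x) dbl_val_flipD // Jstar_mod4.
Qed.

Definition dbl_fun sigma x := (sigma x.1, x.2 (+) (sigma x.1 != x.1)).

Lemma dbl_fun_inj sigma : injective (dbl_fun sigma).
Proof.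
by move=> [i b] [j c] [/perm_inj ij]; rewrite ij => /addIb ->.
Qed.

Definition dbl_perm sigma : {perm 'I_n * bool} := perm (@dbl_fun_inj sigma).

Lemma dbl_permE sigma x : dbl_perm sigma x = (sigma x.1, x.2 (+) (sigma x.1 != x.1)).
Proof. by rewrite permE. Qed.

Lemma dbl_perm_inj : injective dbl_perm.
Proof.
move=> sigma tau E; apply/permP => i.
by have := congr1 (fun s : {perm _} => (s (i, false)).1) E; rewrite /= !dbl_permE.
Qed.

Lemma conj_flip_dbl_perm sigma : (dbl_perm sigma ^ flipp)%g = dbl_perm sigma.
Proof. by apply/permP => x; rewrite conj_flipE !dbl_permE /flip /= addNb negbK. Qed.

Lemma conj_flip_fst s :
  (s ^ flipp)%g = s -> exists sigma, forall x, (s x).1 = sigma x.1.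
Proof.
move=> sf; have s_flip x : s (flip x) = flip (s x) by rewrite -{1}sf conj_flipE flipK.
have s_fst x y : (s x).1 = (s y).1 <-> x.1 = y.1.
  split => [/flip_fst[/perm_inj -> // | ] | /flip_fst[-> // | ->]].
    by rewrite -s_flip => /perm_inj ->.
  by rewrite s_flip.
pose g i := (s (i, false)).1.
have g_inj : injective g by move=> i j /s_fst.
by exists (perm g_inj) => x; rewrite permE /g; apply/s_fst.
Qed.

Lemma fixed_conj_flip k s : s \in invols dbl_val k Jstar ->
  (s ^ flipp)%g = s -> exists sigma, s = dbl_perm sigma.
Proof.
move=> sX /conj_flip_fst[sigma s_fst]; exists sigma.
apply/permP => x; rewrite dbl_permE -s_fst.
have [sx | /(invols_moved dbl_val_inj sX)/Jstar_mod4] := eqVneq (s x) x.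
  by rewrite sx eqxx addbF; case: x {s_fst sx}.
move: (s x) => [j c] /dbl_val_sum_mod4 /= [-> ne].
suff -> : (j != x.1) by rewrite addbT.
by apply: contra ne => /eqP ->.
Qed.

Lemma dbl_perm_sqr sigma :
  ((dbl_perm sigma * dbl_perm sigma)%g == 1%g) = ((sigma * sigma)%g == 1%g).
Proof.
apply/eqP/eqP => E; apply/permP.
  move=> i; have := congr1 (fun s : {perm _} => (s (i, false)).1) E.
  by rewrite /= !permM !dbl_permE !perm1.
move=> [i b]; have ssi : sigma (sigma i) = i by rewrite -permM E perm1.
by rewrite permM !dbl_permE perm1 /= ssi (eq_sym i) addbK.
Qed.

Lemma lt_dbl_perm sigma x :
  (dbl_val x < dbl_val (dbl_perm sigma x)) = (x.1 < sigma x.1).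
Proof.
rewrite dbl_permE /dbl_val /=.
have [-> | ne] := eqVneq (sigma x.1) x.1; first by rewrite addbF !ltnn.
have ne' : (sigma x.1 : nat) != x.1 by [].
by rewrite addbT; case: x.2 => /=; apply/idP/idP; lia.
Qed.

Lemma dbl_val_dbl_permD sigma x : x.1 < sigma x.1 ->
  dbl_val x + dbl_val (dbl_perm sigma x) = (x.1 + sigma x.1) * 2 + 1.
Proof.
move=> lt; rewrite dbl_permE /dbl_val /= (_ : sigma x.1 != x.1) ?addbT; last first.
  by rewrite neq_ltn lt orbT.
by case: x.2 lt => /=; lia.
Qed.

Lemma card_lt_dbl_perm sigma :
  #|[set x | dbl_val x < dbl_val (dbl_perm sigma x)]| =
  #|[set i : 'I_n | i < sigma i]| * 2.
Proof.
have -> : [set x | dbl_val x < dbl_val (dbl_perm sigma x)] =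
          setX [set i : 'I_n | i < sigma i] [set: bool].
  by apply/setP => -[i b]; rewrite !inE lt_dbl_perm andbT.
by rewrite cardsX cardsT card_bool.
Qed.

Lemma dbl_perm_invols k sigma :
  (dbl_perm sigma \in invols dbl_val k Jstar) =
  ~~ odd k && (sigma \in invols (fun i : 'I_n => nth_Pset i) k./2 Jstar).
Proof.
rewrite !inE dbl_perm_sqr card_lt_dbl_perm eqn_mul2_half.
have -> : [set i : 'I_n | nth_Pset i < nth_Pset (sigma i)] = [set i : 'I_n | i < sigma i].
  by apply/setP => i; rewrite !inE nth_Pset_mono.
case: (odd k) => /=; first by rewrite andbF.
congr [&& _, _ & _].
apply/forallP/forallP => [sB i | sB x]; rewrite ?nth_Pset_mono ?lt_dbl_perm;
  apply/implyP => lt.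
  by have := sB (i, false); rewrite lt_dbl_perm lt dbl_val_dbl_permD // Jstar_nth_PsetD.
by have := sB x.1; rewrite nth_Pset_mono lt dbl_val_dbl_permD // Jstar_nth_PsetD.
Qed.

Lemma fixed_conj_flip_invols k :
  [set s in invols dbl_val k Jstar | (s ^ flipp)%g == s] =
  dbl_perm @: [set sigma | dbl_perm sigma \in invols dbl_val k Jstar].
Proof.
apply/setP => s; rewrite inE; apply/andP/imsetP => [[sX /eqP] | [sigma]].
  by move=> /(fixed_conj_flip sX)[sigma ss]; exists sigma; rewrite // in_set -ss.
by rewrite in_set => sX ->; rewrite sX conj_flip_dbl_perm.
Qed.

End Doubling.

Theorem lemma2p3 (n k : nat) :
  mu (first_m Nset (2 * n)) k Jstar =
  (if odd k then 0 else mu (first_m Pset n) (k./2) Jstar) %[mod 2].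
Proof.
have ord_nth_Pset_inj : injective (fun i : 'I_n => nth_Pset i).
  by move=> i j /nth_Pset_inj /ord_inj.
rewrite (mu_codom (@dbl_val_inj n) (@first_m_Nset_codom n)).
rewrite (mu_codom ord_nth_Pset_inj (first_m_Pset_codom n)).
rewrite (card_involutive_mod2 (@conj_flipK n) (@conj_flip_invols n k)).
rewrite fixed_conj_flip_invols card_imset; last exact: dbl_perm_inj.
case: ifP => odd_k; congr (_ %% _).
  by apply: eq_card0 => sigma; rewrite in_set dbl_perm_invols odd_k.
by apply: eq_card => sigma; rewrite in_set dbl_perm_invols odd_k.
Qed.
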